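(* Let $k$ be a field of characteristic $p>0$, $P$ a finite poset, $R=\mathcal{R}_k[J(P)]$ the Hibi ring and $\mathfrak{m}=R_+$. Then \[ \limsup_{e\to\infty}\frac{\nu(p^e)}{p^e}\ \le\ \operatorname{rank}^*P+2, \] where $\nu(p^e)=\max\{r\in\mathbb{N}\mid\mathfrak{m}^r\not\subseteq\mathfrak{m}^{[p^e]}\}$.
   Context: Let $P=\{p_1,\dots,p_N\}$ be a finite poset and $J(P)$ the set of poset ideals of $P$ (down-closed subsets, including $\emptyset$ and $P$). The Hibi ring is $\mathcal{R}_k[J(P)]=k[\,T\prod_{p_i\in I}X_i\mid I\in J(P)\,]\subseteq k[T,X_1,\dots,X_N]$, each generator in degree $1$; $\mathfrak{m}=R_+$ is generated by these generators; $\mathfrak{m}^{[q]}=(x^q\mid x\in\mathfrak{m})$. $x\lessdot y$ means $x<y$ with no $z$ satisfying $x<z<y$. A path is a sequence $C=(q_1,\dots,q_t)$ of distinct elements of $P$ with $q_1$ minimal in $P$, consecutive elements related by $q_i\lessdot q_{i+1}$ or $q_{i+1}\lessdot q_i$, and $q_{t-1}\lessdot q_t$ (when $t\ge2$); it is maximal if $q_t$ is maximal in $P$. For $1<i<t$, $q_i$ is locally maximal if $q_{i-1}\lessdot q_i$ and $q_{i+1}\lessdot q_i$, locally minimal if $q_i\lessdot q_{i-1}$ and $q_i\lessdot q_{i+1}$; $q_1$ counts as locally minimal and $q_t$ as locally maximal. The decomposition $C=A_1+D_1+\cdots+D_{n-1}+A_n$ splits $C$ into consecutive blocks: $A_1$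 is $q_1$ through the first locally maximal element, $D_1$ the following elements through the next locally minimal element, $A_2$ the following elements through the next locally maximal element, etc., $A_n$ ending at $q_t$; $t(A_i)$ is the last element of $A_i$, $V(\cdot)$ the set of elements of a block, $\langle A\rangle=\{q\in P\mid q\le t(A)\}$, and $\langle A_i\setminus t(A_i)\rangle$ the poset ideal generated by the elements of $A_i$ other than $t(A_i)$. $C$ satisfies ( * ) if for all $1\le i\le n-1$: (1) $V(D_i)\cap(\bigcup_{m=1}^{i-1}\langle A_m\rangle\cup\langle A_i\setminus t(A_i)\rangle\cup\{t(A_i)\})=\emptyset$; (2) $V(A_{i+1})\cap\bigcup_{m=1}^{i}\langle A_m\rangle=\emptyset$. $\operatorname{len}^*C=\#\{i\mid q_i\lessdot q_{i+1}\}$, and $\operatorname{rank}^*P$ is the maximum of $\operatorname{len}^*C$ over maximal paths $C$ satisfying ( * ). *)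

From HB Require Import structures.
From mathcomp Require Import all_boot all_order all_algebra.
From mathcomp Require Import mpoly.

Set Implicit Arguments.
Unset Strict Implicit.
Unset Printing Implicit Defensive.

Import Order.TTheory GRing.Theory.

(* A path C = (q_1,...,q_t) is a seq P; indices are 0-based internally.      *)
Section Paths.
Variables (d : Order.disp_t) (P : finPOrderType d).
Local Open Scope order_scope.

Definition cov (x y : P) : bool :=
  (x < y) && [forall z, ~~ ((x < z) && (z < y))].
Definition minimalP (x : P) : bool := [forall y, ~~ (y < x)].
Definition maximalP (x : P) : bool := [forall y, ~~ (x < y)].

Variable x0 : P.

Definition qq (c : seq P) (i : nat) : P := nth x0 c i.

Definition is_path (c : seq P) : bool :=
  [&& (0 < size c)%N, uniq c, minimalP (qq c 0),
      all (fun i => cov (qq c i) (qq c i.+1) || cov (qq c i.+1) (qq c i))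
          (iota 0 (size c).-1)
    & (2 <= size c)%N ==> cov (qq c (size c).-2) (qq c (size c).-1)].

Definition is_max_path (c : seq P) : bool :=
  is_path c && maximalP (qq c (size c).-1).

(* locally maximal / locally minimal positions (q_t counts as locally
   maximal, q_1 as locally minimal) *)
Definition loc_max (c : seq P) (i : nat) : bool :=
  (i == (size c).-1) ||
  [&& (0 < i)%N, (i < (size c).-1)%N, cov (qq c i.-1) (qq c i)
    & cov (qq c i.+1) (qq c i)].
Definition loc_min (c : seq P) (i : nat) : bool :=
  (i == 0%N) ||
  [&& (0 < i)%N, (i < (size c).-1)%N, cov (qq c i) (qq c i.-1)
    & cov (qq c i) (qq c i.+1)].

(* positions of the ends t(A_1) < t(A_2) < ... < t(A_n) = q_t of the A-blocks,
   and of the ends t(D_1) < ... < t(D_{n-1}) of the D-blocks *)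
Definition peaks (c : seq P) : seq nat := [seq i <- iota 0 (size c) | loc_max c i].
Definition valleys (c : seq P) : seq nat :=
  [seq i <- iota 0 (size c) | (0 < i)%N && loc_min c i].
Definition nblocks (c : seq P) : nat := size (peaks c).
Definition pk (c : seq P) (j : nat) : nat := nth 0%N (peaks c) j.
Definition vl (c : seq P) (j : nat) : nat := nth 0%N (valleys c) j.

(* index sets of the blocks A_{j+1} and D_{j+1} (0-based block index j) *)
Definition Aidx (c : seq P) (j : nat) : seq nat :=
  [seq i <- iota 0 (size c) |
     ((j == 0%N) || (vl c j.-1 < i)%N) && (i <= pk c j)%N].
Definition Didx (c : seq P) (j : nat) : seq nat :=
  [seq i <- iota 0 (size c) | (pk c j < i)%N && (i <= vl c j)%N].
Definition tA (c : seq P) (j : nat) : P := qq c (pk c j).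

Definition starC (c : seq P) : bool :=
  all (fun j =>
    (* (1) V(D_i) avoids  U_{m<i} <A_m>  U  <A_i \ t(A_i)>  U  {t(A_i)} *)
    all (fun i =>
           ~~ [|| has (fun m => qq c i <= tA c m) (iota 0 j),
                  has (fun i' => (i' != pk c j) && (qq c i <= qq c i')) (Aidx c j)
                | qq c i == tA c j])
        (Didx c j)
    (* (2) V(A_{i+1}) avoids U_{m<=i} <A_m> *)
    && all (fun i => ~~ has (fun m => qq c i <= tA c m) (iota 0 j.+1))
           (Aidx c j.+1))
  (iota 0 (nblocks c).-1).

Definition lenstar (c : seq P) : nat :=
  count (fun i => cov (qq c i) (qq c i.+1)) (iota 0 (size c).-1).

End Paths.

(* rank^* P : maximum of len^* C over maximal paths C satisfying (star).
   Paths have distinct elements, hence length n.+1 <= #|P|.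
   (For the empty poset this maximum over the empty family is 0.) *)
Definition rank_star (d : Order.disp_t) (P : finPOrderType d) : nat :=
  \max_(n < #|P|)
    \max_(t : n.+1.-tuple P | is_max_path (thead t) t && starC (thead t) t)
       lenstar (thead t) t.

(* The Hibi ring R_k[J(P)] inside k[T, X_p : p in P] = {mpoly k[#|P|.+1]},   *)
(* T = 'X_0 and X_p = 'X_(lift 0 (enum_rank p)).                              *)
Section Hibi.
Variables (k : fieldType) (d : Order.disp_t) (P : finPOrderType d).
Local Open Scope ring_scope.

Notation A := {mpoly k[#|P|.+1]}.

Definition poset_ideal (I : {set P}) : bool :=
  [forall x in I, forall y, (y <= x)%O ==> (y \in I)].

Definition Xv (x : P) : A := 'X_(lift ord0 (enum_rank x)).

Definition hibi_gen (I : {set P}) : A :=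
  'X_ord0 * \prod_(x in I) Xv x.

Inductive inHibi : A -> Prop :=
| inHibi_const (c : k) : inHibi c%:MP
| inHibi_gen (I : {set P}) : poset_ideal I -> inHibi (hibi_gen I)
| inHibi_add f g : inHibi f -> inHibi g -> inHibi (f + g)
| inHibi_mul f g : inHibi f -> inHibi g -> inHibi (f * g).

Inductive idealR (S : A -> Prop) : A -> Prop :=
| idealR0 : idealR S 0
| idealR_mul r s : inHibi r -> S s -> idealR S (r * s)
| idealR_add f g : idealR S f -> idealR S g -> idealR S (f + g).

(* m = R_+, generated by the generators *)
Definition hibi_m : A -> Prop :=
  idealR (fun f => exists2 I, poset_ideal I & f = hibi_gen I).

Definition hibi_m_pow (r : nat) : A -> Prop :=
  idealR (fun f => exists s : seq A,
            [/\ size s = r, {in s, forall x, hibi_m x} & f = \prod_(x <- s) x]).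

Definition hibi_m_frob (q : nat) : A -> Prop :=
  idealR (fun f => exists2 x, hibi_m x & f = x ^+ q).

Definition pow_not_in_frob (r q : nat) : Prop :=
  ~ (forall f, hibi_m_pow r f -> hibi_m_frob q f).

End Hibi.

(* Write q = p^e. A product of r generators T X^{J_1} ... T X^{J_r} has X_x-exponent
   a(x) = #{i | x in J_i}, an antitone function with values in [0, r]. It lies in
   m^[q] once we find a poset ideal I such that a - q 1_I is still antitone with
   values in [0, r - q]: the product is then (T X^I)^q times the r - q generators
   given by the level sets of a - q 1_I.
   Take for I the points reachable from the minimal elements m with a(m) > r - q
   by down-covers and by up-covers u < v with a(u) < a(v) + q. If a point of I had
   a < q, the walk reaching it would rise more than rank^* P times; shortening it
   until it has no shortcut and extending it up to a maximal element gives a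
   maximal path satisfying (star) with len^* > rank^* P, which is absurd. Hence
   nu(q) < (rank^* P + 2) q for every q >= 2. *)

From HB Require Import structures.
From mathcomp Require Import all_boot all_order all_algebra.
From mathcomp Require Import mpoly.
From mathcomp Require Import zify.
From Stdlib Require Import Classical.
Import Order.TTheory GRing.Theory Num.Theory.
Set Implicit Arguments.
Unset Strict Implicit.
Unset Printing Implicit Defensive.

Section CoveringRelation.
Variables (d : Order.disp_t) (P : finPOrderType d).
Local Open Scope order_scope.
Implicit Types x y z : P.

Lemma cov_lt x y : cov x y -> x < y.
Proof. by case/andP. Qed.

Lemma cov_asym x y : cov x y -> cov y x -> False.
Proof. by move=> /cov_lt h1 /cov_lt h2; move: (lt_trans h1 h2); rewrite ltxx. Qed.

Lemma cov_ind (Q : P -> P -> Prop) :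
  (forall x y, cov x y -> Q x y) ->
  (forall x z y, x < z -> z < y -> Q x z -> Q z y -> Q x y) ->
  forall x y, x < y -> Q x y.
Proof.
move=> Qcov Qtrans.
suff H n x y : (#|[set z | (x < z)%O && (z < y)%O]| < n)%N -> x < y -> Q x y.
  by move=> x y; apply: (H _.+1).
elim: n x y => [//|n IH] x y hn lxy; rewrite ltnS in hn.
case: (boolP [exists z, (x < z) && (z < y)]) => [/existsP [z /andP [xz zy]]|noz].
  apply: (Qtrans x z y xz zy); apply: IH => //.
    apply: leq_trans hn; apply: proper_card; apply/properP; split.
      by apply/subsetP => w; rewrite !inE => /andP [-> /= h]; apply: lt_trans h zy.
    by exists z; rewrite !inE ?xz ?zy ?ltxx ?andbF.
  apply: leq_trans hn; apply: proper_card; apply/properP; split.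
    by apply/subsetP => w; rewrite !inE => /andP [h ->]; rewrite (lt_trans xz h).
  by exists z; rewrite !inE ?xz ?zy ?ltxx ?andbF.
apply: Qcov; rewrite /cov lxy /=; apply/forallP => z; apply/negP => h.
by move/negP: noz; apply; apply/existsP; exists z.
Qed.

Lemma connect_cov_between x y : x <= y ->
  connect (fun u v => [&& cov u v, x <= u & v <= y]) x y.
Proof.
rewrite le_eqVlt => /orP [/eqP -> //|].
pose Q x y := forall x' y', x' <= x -> y <= y' ->
  connect (fun u v => [&& cov u v, x' <= u & v <= y']) x y.
suff H x1 y1 : x1 < y1 -> Q x1 y1 by move=> h; apply: (H _ _ h).
move: x1 y1; apply: cov_ind.
  by move=> a b hab x' y' h1 h2; apply: connect1; rewrite hab h1 h2.
move=> a c b ac cb H1 H2 x' y' h1 h2.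
apply: connect_trans (H1 _ _ h1 _) (H2 _ _ _ h2).
  exact: le_trans (ltW cb) h2.
exact: le_trans h1 (ltW ac).
Qed.

Lemma connect_cov x y : x <= y -> connect (@cov d P) x y.
Proof. by move/connect_cov_between; apply: connect_sub => u v /andP [h _]; exact: connect1. Qed.

Lemma connect_cov_down x y : y <= x -> connect (fun u v => cov v u) x y.
Proof. by move/connect_cov; rewrite (connect_rev (@cov d P)). Qed.

Lemma exists_minimal_le x : exists2 m, minimalP m & m <= x.
Proof.
suff H n x1 : (#|[set y | (y < x1)%O]| < n)%N -> exists2 m, minimalP m & m <= x1.
  exact: (H _.+1).
elim: n x1 => [//|n IH] x1 hn; rewrite ltnS in hn.
case: (boolP (minimalP x1)) => [hm|]; first by exists x1.
case/forallPn => y; rewrite negbK => yx.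
have [m hm my] : exists2 m, minimalP m & m <= y.
  apply: IH; apply: leq_trans hn; apply: proper_card; apply/properP; split.
    by apply/subsetP => w; rewrite !inE => h; apply: lt_trans h yx.
  by exists y; rewrite !inE ?yx ?ltxx.
by exists m => //; apply: le_trans my (ltW yx).
Qed.

Lemma exists_maximal_ge x : exists2 m, maximalP m & x <= m.
Proof.
suff H n x1 : (#|[set y | (x1 < y)%O]| < n)%N -> exists2 m, maximalP m & x1 <= m.
  exact: (H _.+1).
elim: n x1 => [//|n IH] x1 hn; rewrite ltnS in hn.
case: (boolP (maximalP x1)) => [hm|]; first by exists x1.
case/forallPn => y; rewrite negbK => xy.
have [m hm ym] : exists2 m, maximalP m & y <= m.
  apply: IH; apply: leq_trans hn; apply: proper_card; apply/properP; split.
    by apply/subsetP => w; rewrite !inE => h; apply: lt_trans xy h.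
  by exists y; rewrite !inE ?xy ?ltxx.
by exists m => //; apply: le_trans (ltW xy) ym.
Qed.

End CoveringRelation.

Lemma nth_filter_iota_lt (a : pred nat) n x j : (x <= n)%N ->
  (j < count a (iota 0 x))%N -> (nth 0%N (filter a (iota 0 n)) j < x)%N.
Proof.
move=> xn jc.
have -> : iota 0 n = iota 0 x ++ iota x (n - x) by rewrite -iotaD subnKC.
rewrite filter_cat nth_cat size_filter jc.
have : nth 0%N (filter a (iota 0 x)) j \in filter a (iota 0 x).
  by apply: mem_nth; rewrite size_filter.
by rewrite mem_filter mem_iota add0n => /andP [_ /andP [_ ->]].
Qed.

Lemma nth_filter_iota (a : pred nat) n j : (j < count a (iota 0 n))%N ->
  let y := nth 0%N (filter a (iota 0 n)) j in
  [/\ (y < n)%N, a y & count a (iota 0 y) = j].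
Proof.
move=> jc y.
have yin : y \in filter a (iota 0 n) by apply: mem_nth; rewrite size_filter.
move: (yin); rewrite mem_filter mem_iota add0n => /andP [ay /andP [_ yn]].
split => //.
have hu : uniq (filter a (iota 0 n)) by apply: filter_uniq; apply: iota_uniq.
case: (ltngtP j (count a (iota 0 y))) => // h.
  by have := nth_filter_iota_lt (ltnW yn) h; rewrite -/y ltnn.
have e : iota 0 n = iota 0 y ++ iota y (n - y) by rewrite -iotaD subnKC // ltnW.
have e2 : iota y (n - y) = y :: iota y.+1 (n - y).-1.
  by case E: (n - y) => [|m] /=; [move: yn; rewrite -subn_gt0 E | ].
have hc : (count a (iota 0 y) < size (filter a (iota 0 n)))%N.
  by rewrite size_filter (leq_trans h) // ltnW.
have E : nth 0%N (filter a (iota 0 n)) (count a (iota 0 y)) = y.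
  by rewrite {1}e filter_cat nth_cat size_filter ltnn subnn e2 /= ay.
move/eqP: E; rewrite nth_uniq // ?size_filter // => /eqP h2.
by move: h; rewrite h2 ltnn.
Qed.

Lemma last_take (T : Type) (x : T) s n : (n <= size s)%N -> last x (take n s) = nth x (x :: s) n.
Proof.
move=> hn; rewrite (last_nth x) size_takel //.
by case: n hn => [|n] hn //=; rewrite nth_take.
Qed.

Section NoShortcut.
Variables (d : Order.disp_t) (P : finPOrderType d) (x0 : P).
Local Open Scope order_scope.
Local Arguments qq : simpl never.

Definition zigzag (c : seq P) := forall i, (i.+1 < size c)%N ->
  cov (qq x0 c i) (qq x0 c i.+1) || cov (qq x0 c i.+1) (qq x0 c i).

Definition no_shortcut (c : seq P) := forall i k j, (i <= k)%N -> (k < j)%N ->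
  (j < size c)%N -> cov (qq x0 c k) (qq x0 c k.+1) -> ~~ (qq x0 c j <= qq x0 c i).

Lemma uniq_of_no_shortcut c : zigzag c -> no_shortcut c -> uniq c.
Proof.
move=> zz ns.
have down_run_lt i n : (i + n.+1 < size c)%N ->
    (forall k, (i <= k)%N -> (k < i + n.+1)%N -> ~~ cov (qq x0 c k) (qq x0 c k.+1)) ->
    qq x0 c (i + n.+1) < qq x0 c i.
  elim: n => [|n IH] hs hk.
    rewrite addn1 in hs *; have := zz i hs.
    by rewrite (negbTE (hk i (leqnn _) _)) ?addn1 //= => /cov_lt.
  have h1 : qq x0 c (i + n.+1) < qq x0 c i.
    apply: IH; first by clear -hs; lia.
    by move=> k h h'; apply: hk => //; clear -h'; lia.
  apply: lt_trans h1.
  have := zz (i + n.+1); rewrite -addnS => /(_ hs).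
  have hk' := hk (i + n.+1) ltac:(clear; lia) ltac:(clear; lia); rewrite -addnS in hk'.
  by rewrite (negbTE hk') /= => /cov_lt.
apply/(uniqP x0) => i j; rewrite !inE => hi hj e.
wlog ij : i j hi hj e / (i <= j)%N.
  move=> H; case: (leqP i j) => h; first exact: H.
  by symmetry; apply: H => //; rewrite ltnW.
move: ij; rewrite leq_eqVlt => /orP [/eqP //|ij]; exfalso.
case: (boolP (has (fun k => cov (qq x0 c k) (qq x0 c k.+1)) (iota i (j - i)))).
  case/hasP => k; rewrite mem_iota (subnKC (ltnW ij)) => /andP [ik kj] hc.
  by have := ns i k j ik kj hj hc; rewrite /qq e lexx.
move/hasPn => hn.
have ej : j = (i + (j - i).-1.+1)%N by rewrite prednK ?subn_gt0 // subnKC // ltnW.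
move: hj e hn; rewrite ej; set n := (j - i).-1 => hj e hn.
suff : qq x0 c (i + n.+1) < qq x0 c i by rewrite /qq -e ltxx.
apply: down_run_lt hj _ => k h1 h2; apply: hn.
by rewrite mem_iota h1 /=; clear -h2; lia.
Qed.

Section Star.
Variable c : seq P.
Local Notation q := (qq x0 c).
Local Notation sz := (size c).
Hypothesis c_zigzag : zigzag c.
Hypothesis c_first_up : (1 < sz)%N -> cov (q 0) (q 1).
Hypothesis c_last_up : (1 < sz)%N -> cov (q sz.-2) (q sz.-1).
Hypothesis c_uniq : uniq c.
Hypothesis c_no_shortcut : no_shortcut c.
Hypothesis c_nonempty : (0 < sz)%N.

Let valley i := (0 < i)%N && loc_min x0 c i.
Local Notation nb := (nblocks x0 c).
Local Notation pk := (pk x0 c).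
Local Notation vl := (vl x0 c).

(* Peaks and valleys alternate along a zigzag walk starting upwards. *)
Lemma count_peaks_valleys x : (x < sz)%N ->
  count (loc_max x0 c) (iota 0 x) =
  (count valley (iota 0 x) + ((0 < x)%N && cov (q x) (q x.-1)))%N.
Proof.
elim: x => [//|x IH] hx.
rewrite -addn1 !iotaD !count_cat !add0n /= !addn0.
have hx' : (x < sz)%N by apply: ltnW.
rewrite IH // /valley /loc_max /loc_min.
case: x IH hx hx' => [|x] IH hx hx'.
  have h1 := c_first_up hx.
  have -> : (0 == sz.-1) = false by case: sz hx => [|[|]].
  rewrite addn1 /=; case h2: (cov (q 1) (q 0)); rewrite ?andbF //.
  by case: (cov_asym h1 h2).
have -> : (x.+1 == sz.-1) = false.
  by apply/negbTE; rewrite neq_ltn -ltnS prednK ?hx // (ltn_trans _ hx).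
have -> : (x.+1 < sz.-1)%N by rewrite -ltnS prednK // (ltn_trans _ hx).
rewrite !addn1 /=.
have A := c_zigzag hx'; have B := c_zigzag hx.
have nA : ~~ (cov (q x) (q x.+1) && cov (q x.+1) (q x)).
  by apply/negP => /andP [h1 h2]; case: (cov_asym h1 h2).
have nB : ~~ (cov (q x.+1) (q x.+2) && cov (q x.+2) (q x.+1)).
  by apply/negP => /andP [h1 h2]; case: (cov_asym h1 h2).
move: A B nA nB.
case: (cov (q x) (q x.+1)); case: (cov (q x.+1) (q x));
case: (cov (q x.+1) (q x.+2)); case: (cov (q x.+2) (q x.+1)) => //= *; lia.
Qed.

Lemma iota_size_rcons : iota 0 sz = rcons (iota 0 sz.-1) sz.-1.
Proof. by rewrite -cats1 -{1}(prednK c_nonempty) -addn1 iotaD. Qed.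

Lemma nblocks_valleys : nb = (size (valleys x0 c)).+1.
Proof.
rewrite /nblocks /peaks /valleys !size_filter iota_size_rcons -!cats1 !count_cat /=.
rewrite count_peaks_valleys ?ltn_predL //.
have -> : loc_max x0 c sz.-1 by rewrite /loc_max eqxx.
have -> : ((0 < sz.-1)%N && loc_min x0 c sz.-1) = false.
  by rewrite /loc_min ltnn !andbF orbF; case: (sz.-1).
have -> : (0 < sz.-1)%N && cov (q sz.-1) (q sz.-1.-1) = false.
  case h: (0 < sz.-1)%N => //=; apply/negbTE/negP => h2.
  have h1 : (1 < sz)%N by rewrite -(prednK c_nonempty) ltnS.
  exact: cov_asym (c_last_up h1) h2.
by rewrite /valley !addn0 addn1.
Qed.

Lemma count_peaks_below_last : count (loc_max x0 c) (iota 0 sz.-1) = nb.-1.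
Proof.
rewrite /nblocks /peaks size_filter iota_size_rcons -cats1 count_cat /= ?addn0.
have -> : loc_max x0 c sz.-1 by rewrite /loc_max eqxx.
by rewrite addn1.
Qed.

Lemma inner_peak j : (j < nb.-1)%N ->
  [/\ (0 < pk j)%N, (pk j < sz.-1)%N, cov (q (pk j).-1) (q (pk j)),
      count (loc_max x0 c) (iota 0 (pk j)) = j & (pk j < sz)%N].
Proof.
move=> hj.
have hj' : (j < count (loc_max x0 c) (iota 0 sz))%N.
  move: hj; rewrite /nblocks /peaks size_filter.
  by case: (count _ _) => //= n h; apply: ltn_trans h _.
have [h1 h2 h3] := nth_filter_iota hj'.
have lt : (pk j < sz.-1)%N.
  by apply: nth_filter_iota_lt; [exact: leq_pred | rewrite count_peaks_below_last].
move: h2; rewrite /loc_max -/(pk j) (ltn_eqF lt) /= => /and4P [a b e f].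
by split.
Qed.

Lemma inner_valley j : (j < nb.-1)%N ->
  [/\ (pk j < vl j)%N, (vl j < sz.-1)%N & cov (q (vl j)) (q (vl j).+1)].
Proof.
move=> hj.
have hj' : (j < count valley (iota 0 sz))%N.
  by move: hj; rewrite nblocks_valleys /valleys size_filter.
have [h1 h2 h3] := nth_filter_iota hj'.
move: h2 h3; rewrite /vl /valleys.
set z := nth 0%N _ j => /andP [z0].
rewrite /loc_min (negbTE (lt0n_neq0 z0)) /= => /and4P [_ zs zd zu] hc.
split => //.
apply: nth_filter_iota_lt; first exact: ltnW.
by rewrite count_peaks_valleys // hc z0 /= zd addn1.
Qed.

Lemma inner_peak_mono m j : (m < j)%N -> (j < nb.-1)%N -> (pk m < pk j)%N.
Proof.
move=> mj hj; have [_ _ _ hc hs] := inner_peak hj.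
by apply: nth_filter_iota_lt; [exact: ltnW | rewrite hc].
Qed.

Lemma starC_of_no_shortcut : starC x0 c.
Proof.
apply/allP => j; rewrite mem_iota add0n => /andP [_ hj].
have [p0 ps pc pcount psz] := inner_peak hj.
have [pv vs vc] := inner_valley hj.
have ns_peak i0 i' : (i0 < pk j)%N -> (pk j <= i')%N -> (i' < sz)%N -> ~~ (q i' <= q i0).
  move=> h1 h2 h3; apply: (c_no_shortcut (k := (pk j).-1)) h3 _.
  - by rewrite -ltnS (prednK p0).
  - by rewrite -ltnS (prednK p0) ltnS.
  - by rewrite (prednK p0).
apply/andP; split.
  apply/allP => i; rewrite /Didx mem_filter mem_iota add0n.
  move=> /andP [/andP [pi iv] /andP [_ isz]].
  apply/negP => /or3P [].
  - case/hasP => m; rewrite mem_iota add0n => /andP [_ mj] hle.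
    have := ns_peak _ _ (inner_peak_mono mj hj) (ltnW pi) isz.
    by rewrite /tA in hle; rewrite hle.
  - case/hasP => i'; rewrite /Aidx mem_filter mem_iota add0n.
    move=> /andP [/andP [_ i'p] _] /andP [ne hle].
    have i'p' : (i' < pk j)%N by rewrite ltn_neqAle ne.
    by have := ns_peak _ _ i'p' (ltnW pi) isz; rewrite hle.
  - rewrite /tA => /eqP e.
    have := nth_uniq x0 isz psz c_uniq.
    by rewrite /qq in e; rewrite e eqxx (gtn_eqF pi).
apply/allP => i; rewrite /Aidx mem_filter mem_iota add0n.
move=> /andP [/andP [hv _] /andP [_ isz]].
have vi : (vl j < i)%N by case/orP: hv.
apply/negP; case/hasP => m; rewrite mem_iota add0n => /andP [_ mj] hle.
have hm : (pk m <= pk j)%N.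
  move: mj; rewrite ltnS leq_eqVlt => /orP [/eqP -> // | h].
  exact: ltnW (inner_peak_mono h hj).
have := c_no_shortcut (i := pk m) (k := vl j) (j := i).
rewrite (leq_trans hm (ltnW pv)) vi isz => /(_ isT isT isT vc).
by rewrite /tA in hle; rewrite hle.
Qed.

End Star.

End NoShortcut.

Section Walks.
Variables (d : Order.disp_t) (P : finPOrderType d).
Local Open Scope order_scope.
Implicit Types x y z m : P.
Local Arguments qq : simpl never.

Fixpoint ups x (p : seq P) : nat :=
  if p is y :: p' then (cov x y + ups y p')%N else 0%N.

Lemma ups_cat x p1 p2 : ups x (p1 ++ p2) = (ups x p1 + ups (last x p1) p2)%N.
Proof. by elim: p1 x => [|y p1 IH] x //=; rewrite IH addnA. Qed.

Lemma ups_rcons x p z : ups x (rcons p z) = (ups x p + cov (last x p) z)%N.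
Proof. by rewrite -cats1 ups_cat /= addn0. Qed.

Lemma ups_down x p : path (fun u v => cov v u) x p -> ups x p = 0%N.
Proof.
elim: p x => [|y p IH] x //= /andP [h1 h2]; rewrite IH //.
by case h: (cov x y) => //; case: (cov_asym h h1).
Qed.

Lemma ups_take_mono m p n1 n2 : (n1 <= n2)%N -> (ups m (take n1 p) <= ups m (take n2 p))%N.
Proof. by move=> h; rewrite -(subnKC h) takeD ups_cat leq_addr. Qed.

Lemma ups_takeS m p k : (k < size p)%N ->
  ups m (take k.+1 p) = (ups m (take k p) + cov (nth m (m :: p) k) (nth m (m :: p) k.+1))%N.
Proof. by move=> hk; rewrite (take_nth m hk) ups_rcons last_take // ltnW. Qed.

Lemma lenstar_ups x0 x s : lenstar x0 (x :: s) = ups x s.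
Proof.
elim: s x => [|y s IH] x; first by rewrite /lenstar.
rewrite /lenstar /= -IH /lenstar /=.
by congr addn; rewrite (iotaDl 1 0) count_map; apply: eq_count.
Qed.

Lemma zigzag_path m s :
  path (fun u v => cov u v || cov v u) m s -> zigzag m (m :: s).
Proof. by move/(pathP m) => h i hi; apply: h. Qed.

Lemma qq_rcons x0 s w : qq x0 (rcons s w) (size s) = w.
Proof. by rewrite /qq nth_rcons ltnn eqxx. Qed.

Lemma qq_rcons_prev x0 s w : (0 < size s)%N -> qq x0 (rcons s w) (size s).-1 = last x0 s.
Proof. by move=> h; rewrite /qq nth_rcons prednK // leqnn -nth_last. Qed.

Lemma lenstar_le_rank_star m s :
  is_max_path m (m :: s) -> starC m (m :: s) -> (lenstar m (m :: s) <= rank_star P)%N.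
Proof.
move=> hmax hstar.
have hu : uniq (m :: s) by case/andP: hmax => /and5P [].
have hn : (size (m :: s) <= #|P|)%N by rewrite -(card_uniqP hu) max_card.
have hsz : size (m :: s) == (size s).+1 by [].
pose t := Tuple hsz.
apply: leq_trans (leq_bigmax (Ordinal hn)).
apply: (leq_bigmax_cond
  (P := fun t : (size s).+1.-tuple P => is_max_path (thead t) t && starC (thead t) t)
  (F := fun t : (size s).+1.-tuple P => lenstar (thead t) t) t).
by rewrite /= hmax hstar.
Qed.

Lemma max_path_of_no_shortcut m s : minimalP m -> maximalP (last m s) ->
  zigzag m (m :: s) -> no_shortcut m (m :: s) ->
  ((0 < size s)%N -> cov (qq m (m :: s) (size s).-1) (qq m (m :: s) (size s))) ->
  is_max_path m (m :: s) && starC m (m :: s).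
Proof.
move=> hmin hmax zz ns last_up.
have hu := uniq_of_no_shortcut zz ns.
have first_up : (1 < size (m :: s))%N -> cov (qq m (m :: s) 0) (qq m (m :: s) 1).
  move=> h; case/orP: (zz 0 h) => // h2.
  by move/forallP: hmin => /(_ (qq m (m :: s) 1)); rewrite (cov_lt h2).
rewrite (starC_of_no_shortcut zz first_up last_up hu ns) // andbT.
apply/andP; split; last by rewrite /qq nth_last.
apply/and5P; split => //.
- by apply/allP => i; rewrite mem_iota add0n => /andP [_ hi]; apply: zz; rewrite -ltn_predRL.
- exact/implyP.
Qed.

Lemma no_shortcut_cat_up m p' z ext : cov (last m p') z -> path (@cov d P) z ext ->
  no_shortcut m (m :: rcons p' z) -> no_shortcut m ((m :: rcons p' z) ++ ext).
Proof.
move=> last_up hext ns.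
set p := rcons p' z; set c := (m :: p) ++ ext.
have hlast : cov (qq m (m :: p) (size p).-1) (qq m (m :: p) (size p)).
  rewrite /p size_rcons.
  change (cov (qq m (rcons (m :: p') z) (size (m :: p')).-1)
              (qq m (rcons (m :: p') z) (size (m :: p')))).
  by rewrite qq_rcons qq_rcons_prev.
have p_pos : (0 < size p)%N by rewrite size_rcons.
have hszc : size c = (size p + size ext).+1 by rewrite /c size_cat.
have e1 t : (t <= size p)%N -> qq m c t = qq m (m :: p) t.
  by move=> ht; rewrite /c /qq nth_cat /= ltnS ht.
have e2 t : (size p <= t)%N -> qq m c t = nth m (z :: ext) (t - size p).
  move=> ht; rewrite /c (lastI m p) cat_rcons /qq nth_cat size_belast.
  by rewrite ltnNge ht /p last_rcons.
have chain_lt a1 b1 : (a1 < b1)%N -> (b1 < (size ext).+1)%N ->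
    nth m (z :: ext) a1 < nth m (z :: ext) b1.
  move=> ab bs; apply: (sorted_ltn_nth lt_trans) => //.
  - by apply: sub_path hext => u v /cov_lt.
  - by rewrite inE /= (ltn_trans ab bs).
move=> i k j ik kj js hc; apply/negP => hle.
case: (leqP j (size p)) => jp.
  have kp : (k.+1 <= size p)%N by apply: leq_trans kj jp.
  have ip : (i <= size p)%N by apply: leq_trans ik (ltnW kp).
  rewrite (e1 k (ltnW kp)) (e1 k.+1 kp) in hc; rewrite (e1 j jp) (e1 i ip) in hle.
  by move/negP: (ns i k j ik kj (jp : (j < (size p).+1)%N) hc).
have hj' : (j - size p < (size ext).+1)%N by move: js; rewrite hszc; clear -jp; lia.
case: (leqP (size p) i) => ip.
  rewrite !e2 ?(ltnW jp) // in hle.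
  have := chain_lt (i - size p) (j - size p).
  rewrite ltn_sub2r //; last by apply: leq_ltn_trans ik kj.
  by move=> /(_ isT hj') h; move: hle; rewrite (lt_geF h).
have hz : qq m c (size p) <= qq m c j.
  rewrite !e2 ?(ltnW jp) // subnn; apply: ltW; apply: chain_lt hj'.
  by rewrite subn_gt0.
have := ns i (size p).-1 (size p) ltac:(by rewrite -ltnS prednK) ltac:(by rewrite ltn_predL).
rewrite prednK // => /(_ (ltnSn _) hlast).
by rewrite -!e1 ?(ltnW ip) // (le_trans hz hle).
Qed.

(* Extending a no-shortcut walk upwards to a maximal element yields a maximal
   path satisfying (star), whose len^* counts the up-steps of the walk. *)
Lemma ups_le_rank_star m p' z : minimalP m ->
  path (fun u v => cov u v || cov v u) m (rcons p' z) -> cov (last m p') z ->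
  no_shortcut m (m :: rcons p' z) -> (ups m (rcons p' z) <= rank_star P)%N.
Proof.
move=> hmin hwalk last_up ns.
have [M hM hzM] := exists_maximal_ge z.
have [ext hext eM] := connectP (connect_cov hzM).
have [s0 [w [es hw]]] : exists s0 w, rcons p' z ++ ext = rcons s0 w /\ cov (last m s0) w.
  case/lastP: ext hext {eM} => [|e' w] he; first by exists p', z; rewrite cats0.
  exists (rcons p' z ++ e'), w; rewrite rcons_cat last_cat last_rcons.
  by move: he; rewrite rcons_path => /andP [_].
set s := rcons p' z ++ ext.
have zz : zigzag m (m :: s).
  apply: zigzag_path; rewrite cat_path hwalk last_rcons /=.
  by apply: sub_path hext => u v ->.
have ns' : no_shortcut m (m :: s) by apply: no_shortcut_cat_up.
have s_last_up : (0 < size s)%N ->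
    cov (qq m (m :: s) (size s).-1) (qq m (m :: s) (size s)).
  by move=> _; rewrite /s es -rcons_cons size_rcons -/(size (m :: s0)) qq_rcons qq_rcons_prev.
have hmaxs : maximalP (last m s) by rewrite /s last_cat last_rcons -eM.
have /andP [hmax hstar] := max_path_of_no_shortcut hmin hmaxs zz ns' s_last_up.
apply: leq_trans (lenstar_le_rank_star hmax hstar).
by rewrite lenstar_ups /s ups_cat leq_addr.
Qed.

End Walks.

Section FrobeniusIdeal.
Variables (d : Order.disp_t) (P : finPOrderType d).
Local Open Scope order_scope.
Implicit Types x y z u v m : P.
Local Arguments qq : simpl never.
Variables (a : P -> nat) (r qf : nat).
Hypothesis a_antitone : forall x y, x <= y -> (a y <= a x)%N.
Hypothesis a_le : forall x, (a x <= r)%N.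
Hypothesis qf_gt1 : (1 < qf)%N.
Hypothesis r_large : ((rank_star P + 2) * qf <= r)%N.

Let two_qf_le_r : (2 * qf <= r)%N.
Proof. by move: r_large; clear; nia. Qed.

Definition admissible u v := (cov u v && (a u < a v + qf)%N) || cov v u.
Definition seed m := minimalP m && (r < a m + qf)%N.
Definition low_walk m p := [/\ seed m, path admissible m p, (a (last m p) < qf)%N
  & exists p' z, p = rcons p' z /\ cov (last m p') z].

Lemma admissible_path_bound x p : path admissible x p ->
  (a x <= a (last x p) + (qf - 1) * ups x p)%N.
Proof.
elim: p x => [|y p IH] x /=; first by rewrite muln0 addn0.
case/andP => hv hp; have := IH _ hp.
case/orP: hv => [/andP [hc ha]|hc].
  by rewrite hc /= => h; move: ha h; clear; nia.
have := a_antitone (ltW (cov_lt hc)).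
case h: (cov x y); first by case: (cov_asym h hc).
by rewrite add0n; apply: leq_trans.
Qed.

(* Dropping trailing down-steps keeps the endpoint below q. *)
Lemma low_walk_of_path m p : seed m -> path admissible m p -> (a (last m p) < qf)%N ->
  exists p', low_walk m p' /\ (ups m p' <= ups m p)%N.
Proof.
move=> hs; elim/last_ind: p => [|p z IH].
  by move=> _ /= ha; case/andP: hs => _; move: ha two_qf_le_r; clear; lia.
rewrite rcons_path last_rcons => /andP [hp hv] ha.
case/orP: (hv) => [/andP [hc _]|hc].
  exists (rcons p z); split => //; split => //; first by rewrite rcons_path hp hv.
    by rewrite last_rcons.
  by exists p, z.
have [p' [hg hu]] := IH hp (leq_ltn_trans (a_antitone (ltW (cov_lt hc))) ha).
by exists p'; split => //; rewrite ups_rcons; exact: leq_trans hu (leq_addr _ _).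
Qed.

(* A shortcut q_j <= q_i across an up-step is replaced by a chain of down-covers
   from q_i to q_j, which loses at least that up-step. *)
Lemma low_walk_shortcut m p i k j : low_walk m p -> (i <= k)%N -> (k < j)%N ->
  (j < size (m :: p))%N -> cov (qq m (m :: p) k) (qq m (m :: p) k.+1) ->
  qq m (m :: p) j <= qq m (m :: p) i ->
  exists p', low_walk m p' /\ (ups m p' < ups m p)%N.
Proof.
move=> [hs hp ha hl] ik kj js hc hle.
have ij : (i <= j)%N by apply: leq_trans ik (ltnW kj).
have isz : (i <= size p)%N by apply: leq_trans ij js.
set p1 := take i p; set p2 := take (j - i) (drop i p); set p3 := drop j p.
have ep : p = p1 ++ p2 ++ p3 by rewrite catA /p1 /p2 -takeD subnKC // cat_take_drop.
have eu : last m p1 = qq m (m :: p) i by rewrite /p1 last_take.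
have ev : last (last m p1) p2 = qq m (m :: p) j.
  by rewrite -last_cat /p1 /p2 -takeD subnKC // last_take.
have hup : (0 < ups (last m p1) p2)%N.
  have e1 : ups m (take j p) = (ups m p1 + ups (last m p1) p2)%N.
    by rewrite -ups_cat /p1 /p2 -takeD subnKC.
  have h1 := ups_take_mono m p kj.
  have h2 := ups_take_mono m p ik.
  rewrite ups_takeS ?(leq_trans kj js) // in h1.
  rewrite /qq in hc; rewrite hc in h1.
  by move: e1 h1 h2; rewrite -/p1; clear; lia.
have [dd hd el] : exists2 dd, path (fun u v => cov v u) (qq m (m :: p) i) dd &
    qq m (m :: p) j = last (qq m (m :: p) i) dd.
  by apply/connectP; apply: connect_cov_down.
have /and3P [hp1 _ hp3] : [&& path admissible m p1,
    path admissible (last m p1) p2 & path admissible (last (last m p1) p2) p3].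
  by rewrite -!cat_path -ep.
have [p'' [hg hu]] : exists p'', low_walk m p'' /\ (ups m p'' <= ups m (p1 ++ dd ++ p3))%N.
  apply: low_walk_of_path => //.
    rewrite !cat_path hp1 eu (sub_path _ hd) /=; last by move=> u v h; rewrite /admissible h orbT.
    by rewrite -el -ev.
  by move: ha; rewrite ep !last_cat ev eu -el.
exists p''; split => //; apply: leq_ltn_trans hu _.
rewrite [in X in (_ < X)%N]ep !ups_cat eu (ups_down hd) -el -ev -eu.
by move: hup; clear; lia.
Qed.

Lemma exists_low_walk_no_shortcut m p : low_walk m p ->
  exists p', low_walk m p' /\ no_shortcut m (m :: p').
Proof.
move: {2}(ups m p).+1 (ltnSn (ups m p)) => n; elim: n p => [//|n IH] p hn hg.
case: (classic (exists p', low_walk m p' /\ (ups m p' < ups m p)%N)) => [[p' [hg' hu]]|hno].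
  by apply: (IH p') => //; apply: leq_trans hu _; rewrite -ltnS.
exists p; split => // i k j ik kj js hc; apply/negP => hle.
by apply: hno; apply: (low_walk_shortcut hg ik kj js hc hle).
Qed.

(* A low walk would have to rise more than rank^* P times. *)
Lemma no_low_walk m p : low_walk m p -> False.
Proof.
move=> /exists_low_walk_no_shortcut [{}p [[hs hp ha [p' [z [ep last_up]]]] ns]].
have /andP [hmin hseed] := hs.
have ups_gt : (rank_star P < ups m p)%N.
  have := admissible_path_bound hp.
  by move: hseed ha r_large qf_gt1; clear; nia.
have hwalk : path (fun u v => cov u v || cov v u) m p.
  by apply: sub_path hp => u v /orP [/andP [-> _]|->] //; rewrite orbT.
rewrite ep in hwalk ns ups_gt.
by have := ups_le_rank_star hmin hwalk last_up ns; rewrite leqNgt ups_gt.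
Qed.

Definition reach : {set P} := [set y | [exists m, seed m && connect admissible m y]].

Lemma reach_admissible x y : admissible x y -> x \in reach -> y \in reach.
Proof.
move=> hv; rewrite !inE => /existsP [m /andP [hm hc]].
by apply/existsP; exists m; rewrite hm /=; apply: connect_trans hc (connect1 hv).
Qed.

Lemma reach_down_closed x y : y \in reach -> x <= y -> x \in reach.
Proof.
rewrite !inE => /existsP [m /andP [hm hc]] hxy.
apply/existsP; exists m; rewrite hm /=; apply: connect_trans hc _.
apply: connect_sub (connect_cov_down hxy) => u v h.
by apply: connect1; rewrite /admissible h orbT.
Qed.

Lemma reach_ge x : x \in reach -> (qf <= a x)%N.
Proof.
rewrite inE => /existsP [m /andP [hm /connectP [p hp ex]]].
rewrite leqNgt; apply/negP => hx.
have [p' [hg _]] := low_walk_of_path hm hp ltac:(by rewrite -ex).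
exact: no_low_walk hg.
Qed.

Lemma notin_reach_le x : x \notin reach -> (a x + qf <= r)%N.
Proof.
move=> hx; rewrite leqNgt; apply/negP => hlt; move/negP: hx; apply.
have [mm hmin hmx] := exists_minimal_le x.
rewrite inE; apply/existsP; exists mm; apply/andP; split.
  by rewrite /seed hmin /=; apply: leq_trans hlt _; rewrite leq_add2r a_antitone.
apply: connect_sub (connect_cov_between hmx) => u v /and3P [hc hu hv]; apply: connect1.
rewrite /admissible hc /=; apply/orP; left.
have := a_antitone hu; have := a_antitone hv; have := a_le mm.
by move: hlt; clear; lia.
Qed.

Lemma reach_gap x y : x \in reach -> y \notin reach -> x <= y -> (a y + qf <= a x)%N.
Proof.
move=> hx hy; rewrite le_eqVlt => /orP [/eqP exy|]; first by move: hx hy; rewrite exy => ->.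
move: x y hx hy; suff H x y : x < y -> x \in reach -> y \notin reach -> (a y + qf <= a x)%N.
  by move=> x y hx hy hxy; apply: H.
move: x y; apply: cov_ind.
  move=> x y hc hx hy; rewrite leqNgt; apply/negP => h; move/negP: hy; apply.
  by apply: reach_admissible hx; rewrite /admissible hc h.
move=> x z y xz zy H1 H2 hx hy.
case: (boolP (z \in reach)) => hz.
  exact: leq_trans (H2 hz hy) (a_antitone (ltW xz)).
by have := H1 hx hz; have := a_antitone (ltW zy); clear; lia.
Qed.

End FrobeniusIdeal.

Section HibiIdeals.
Variables (k : fieldType) (d : Order.disp_t) (P : finPOrderType d).
Local Notation A := {mpoly k[#|P|.+1]}.
Local Open Scope ring_scope.

Lemma inHibi1 : inHibi (1 : A).
Proof. by rewrite -mpolyC1; apply: inHibi_const. Qed.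

Lemma inHibi_prod_gen (Js : seq {set P}) : all (@poset_ideal d P) Js ->
  inHibi (\prod_(J <- Js) hibi_gen k J).
Proof.
elim: Js => [|J Js IH] /=; first by rewrite big_nil => _; exact: inHibi1.
by case/andP => hJ hJs; rewrite big_cons; apply: inHibi_mul; [apply: inHibi_gen | apply: IH].
Qed.

Lemma idealR_mull (S : A -> Prop) r f : inHibi r -> idealR S f -> idealR S (r * f).
Proof.
move=> hr; elim=> [|r' s hr' hs|f1 f2 _ IH1 _ IH2].
- by rewrite mulr0; apply: idealR0.
- by rewrite mulrA; apply: idealR_mul => //; apply: inHibi_mul.
- by rewrite mulrDr; apply: idealR_add.
Qed.

Lemma idealR_gen (S : A -> Prop) s : S s -> idealR S s.
Proof. by move=> h; rewrite -[s]mul1r; apply: idealR_mul => //; exact: inHibi1. Qed.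

Lemma idealR_sub (S S' : A -> Prop) f :
  (forall s, S s -> idealR S' s) -> idealR S f -> idealR S' f.
Proof.
move=> hS; elim=> [|r s hr hs|f1 f2 _ IH1 _ IH2].
- exact: idealR0.
- by apply: idealR_mull => //; apply: hS.
- by apply: idealR_add.
Qed.

Definition prod_gens (S1 S2 : A -> Prop) (h : A) := exists f g, [/\ S1 f, S2 g & h = f * g].

Lemma idealR_mul_ideal (S1 S2 : A -> Prop) f g :
  idealR S1 f -> idealR S2 g -> idealR (prod_gens S1 S2) (f * g).
Proof.
have L s g' : S1 s -> idealR S2 g' -> idealR (prod_gens S1 S2) (s * g').
  move=> hs; elim=> [|r' s' hr' hs'|f1 f2 _ IH1 _ IH2].
  - by rewrite mulr0; apply: idealR0.
  - by rewrite mulrCA; apply: idealR_mul => //; exists s, s'.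
  - by rewrite mulrDr; apply: idealR_add.
move=> hf hg; elim: hf => [|r s hr hs|f1 f2 _ IH1 _ IH2].
- by rewrite mul0r; apply: idealR0.
- by rewrite -mulrA; apply: idealR_mull => //; apply: L.
- by rewrite mulrDl; apply: idealR_add.
Qed.

Definition hibi_gen_prods (n : nat) (h : A) := exists Js : seq {set P},
  [/\ size Js = n, all (@poset_ideal d P) Js & h = \prod_(J <- Js) hibi_gen k J].

Lemma idealR_prod_hibi_m (s : seq A) : {in s, forall x, hibi_m x} ->
  idealR (hibi_gen_prods (size s)) (\prod_(x <- s) x).
Proof.
elim: s => [|x s IH] hs.
  by rewrite big_nil; apply: idealR_gen; exists [::]; rewrite big_nil.
rewrite big_cons.
have hx : hibi_m x by apply: hs; rewrite mem_head.
have hs' : idealR (hibi_gen_prods (size s)) (\prod_(y <- s) y).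
  by apply: IH => y hy; apply: hs; rewrite inE hy orbT.
apply: idealR_sub (idealR_mul_ideal hx hs') => h [f [g [[I hI ->] [Js [hsz hJs ->] ->]]]].
apply: idealR_gen; exists (I :: Js); split => /=; [by rewrite hsz | by rewrite hI |].
by rewrite big_cons.
Qed.

End HibiIdeals.

Section HibiMonomials.
Variables (k : fieldType) (d : Order.disp_t) (P : finPOrderType d).
Local Notation A := {mpoly k[#|P|.+1]}.
Local Notation n := #|P|.+1.
Local Open Scope ring_scope.

Definition gen_mnm (I : {set P}) : 'X_{1..n} :=
  (U_(ord0) + \sum_(x in I) U_(lift ord0 (enum_rank x)))%MM.

Lemma hibi_genE I : hibi_gen k I = 'X_[gen_mnm I] :> A.
Proof.
rewrite /hibi_gen /gen_mnm mpolyXD; congr (_ * _)%R.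
by rewrite (big_morph (fun m => 'X_[m] : A) (@mpolyXD _ _) (@mpolyX0 _ _)).
Qed.

Lemma gen_mnm0 I : gen_mnm I ord0 = 1%N.
Proof.
rewrite /gen_mnm mnmDE mnm1E eqxx mnm_sumE big1 // => x _.
by rewrite mnm1E eq_sym (negbTE (neq_lift _ _)).
Qed.

Lemma gen_mnm_lift I (j : 'I_#|P|) : gen_mnm I (lift ord0 j) = (enum_val j \in I).
Proof.
rewrite /gen_mnm mnmDE mnm1E (negbTE (neq_lift _ _)) add0n mnm_sumE.
have e x : (lift ord0 (enum_rank x) == lift ord0 j) = (x == enum_val j).
  by rewrite (inj_eq (@lift_inj _ ord0)) -(inj_eq enum_val_inj) enum_rankK.
under eq_bigr => x _ do rewrite mnm1E e.
case: (boolP (enum_val j \in I)) => hj.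
  by rewrite (bigD1 (enum_val j)) //= eqxx big1 // => x /andP [_ h]; rewrite (negbTE h).
by rewrite big1 // => x hx; case: eqP hx => // ->; rewrite (negbTE hj).
Qed.

Lemma prod_hibi_genE (Js : seq {set P}) :
  \prod_(J <- Js) hibi_gen k J = 'X_[(\sum_(J <- Js) gen_mnm J)%MM] :> A.
Proof.
under eq_bigr => J _ do rewrite hibi_genE.
by rewrite (big_morph (fun m => 'X_[m] : A) (@mpolyXD _ _) (@mpolyX0 _ _)).
Qed.

Lemma sum_gen_mnm0 (Js : seq {set P}) : (\sum_(J <- Js) gen_mnm J)%MM ord0 = size Js.
Proof. by rewrite mnm_sumE; under eq_bigr => J _ do rewrite gen_mnm0; rewrite sum1_size. Qed.

Lemma sum_gen_mnm_lift (Js : seq {set P}) (j : 'I_#|P|) :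
  (\sum_(J <- Js) gen_mnm J)%MM (lift ord0 j) = count (fun J : {set P} => enum_val j \in J) Js.
Proof.
rewrite mnm_sumE; under eq_bigr => J _ do rewrite gen_mnm_lift.
by elim: Js => [|J Js IH]; rewrite ?big_nil // big_cons IH.
Qed.

(* A product of Hibi generators is determined by the number of factors and by
   how many of them contain each x. *)
Lemma prod_hibi_gen_factor (Js Ks : seq {set P}) (I : {set P}) (qf : nat) :
  size Js = (size Ks + qf)%N ->
  (forall x, count (fun J : {set P} => x \in J) Js = count (fun J : {set P} => x \in J) Ks + qf * (x \in I))%N ->
  \prod_(J <- Js) hibi_gen k J = \prod_(J <- Ks) hibi_gen k J * hibi_gen k I ^+ qf.
Proof.
move=> hsz hcount.
rewrite !prod_hibi_genE hibi_genE mpolyXn -mpolyXD; congr mpolyX.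
apply/mnmP => i; rewrite mnmDE mulmnE.
case: (unliftP ord0 i) => [j ->|->].
  by rewrite !sum_gen_mnm_lift gen_mnm_lift hcount mulnC.
by rewrite !sum_gen_mnm0 gen_mnm0 hsz mul1n.
Qed.

End HibiMonomials.

Lemma count_level_sets (T : finType) (b : T -> nat) n x :
  count (fun J : {set T} => x \in J) [seq [set y | (j < b y)%N] | j <- iota 0 n] = minn (b x) n.
Proof.
rewrite count_map (eq_count (a2 := fun j => (j < b x)%N)) => [|j]; last by rewrite /= inE.
by elim: n => [|n IH]; rewrite ?minn0 // -addn1 iotaD count_cat IH /= add0n; lia.
Qed.

Section FrobeniusContainment.
Variables (k : fieldType) (d : Order.disp_t) (P : finPOrderType d).
Local Open Scope ring_scope.

Lemma prod_hibi_gen_in_frob (qf r : nat) (Js : seq {set P}) :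
  (1 < qf)%N -> ((rank_star P + 2) * qf <= r)%N ->
  size Js = r -> all (@poset_ideal d P) Js ->
  @hibi_m_frob k d P qf (\prod_(J <- Js) hibi_gen k J).
Proof.
move=> hq hR hsz hJs.
pose a x := count (fun J : {set P} => x \in J) Js.
have a_antitone x y : (x <= y)%O -> (a y <= a x)%N.
  move=> hxy; rewrite /a; clear -hJs hxy.
  elim: Js hJs => [|J Js IH] //= /andP [hJ hJs].
  apply: leq_add; last exact: IH.
  case: (boolP (y \in J)) => // hy /=.
  by move/forallP: hJ => /(_ y); rewrite hy /= => /forallP /(_ x); rewrite hxy /= => ->.
have a_le x : (a x <= r)%N by rewrite -hsz count_size.
pose I := reach a r qf.
have reach_ge' := reach_ge a_antitone hq hR.
have notin_le := notin_reach_le a_antitone a_le (qf := qf).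
have gap := reach_gap a_antitone (r := r) (qf := qf).
pose b x := (a x - qf * (x \in I))%N.
have b_le x : (b x <= r - qf)%N.
  rewrite /b; have := a_le x; case: (boolP (x \in I)) => hx.
    by move: (reach_ge' _ hx); clear; lia.
  by move: (notin_le _ hx); clear; lia.
pose Ks := [seq [set x | (j < b x)%N] | j <- iota 0 (r - qf)].
have hKs : all (@poset_ideal d P) Ks.
  apply/allP => K /mapP [j _ ->].
  apply/forallP => x; apply/implyP; rewrite inE => hx; apply/forallP => y; apply/implyP => hyx.
  rewrite inE; apply: leq_trans hx _; rewrite /b.
  have := a_antitone _ _ hyx.
  case: (boolP (x \in I)) => hxI; first by rewrite (reach_down_closed hxI hyx) /=; clear; lia.
  case: (boolP (y \in I)) => hyI /=; last by clear; lia.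
  by have := gap _ _ hyI hxI hyx; clear; lia.
have hI : poset_ideal I.
  apply/forallP => x; apply/implyP => hx; apply/forallP => y; apply/implyP => hyx.
  exact: reach_down_closed hx hyx.
rewrite (@prod_hibi_gen_factor _ _ _ _ Ks I qf).
- apply: idealR_mul; first exact: inHibi_prod_gen.
  by exists (hibi_gen k I) => //; apply: idealR_gen; exists I.
- by rewrite size_map size_iota hsz subnK //; move: hR; clear; nia.
- move=> x; rewrite count_level_sets (minn_idPl (b_le x)) /b -/(a x).
  case: (boolP (x \in I)) => hx; last by rewrite muln0 subn0 addn0.
  by rewrite muln1 subnK // reach_ge'.
Qed.

Lemma hibi_m_pow_sub_frob (qf r : nat) f :
  (1 < qf)%N -> ((rank_star P + 2) * qf <= r)%N ->
  @hibi_m_pow k d P r f -> @hibi_m_frob k d P qf f.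
Proof.
move=> hq hR; apply: idealR_sub => g [s [hs hin ->]].
apply: idealR_sub (idealR_prod_hibi_m hin) => h [Js [hsz hJs ->]].
by apply: prod_hibi_gen_in_frob hq hR _ hJs; rewrite hsz.
Qed.

End FrobeniusContainment.

Unset Implicit Arguments.
Set Strict Implicit.
Set Printing Implicit Defensive.
Local Open Scope ring_scope.

Theorem corollary2p9 (k : fieldType) (p : nat) (hp : p \in [pchar k])
    (d : Order.disp_t) (P : finPOrderType d) :
  forall eps : rat, 0 < eps ->
  exists E : nat, forall e : nat, (E <= e)%N ->
    forall r : nat, pow_not_in_frob k P r (p ^ e)%N ->
      r%:Q / (p ^ e)%N%:Q <= (rank_star P + 2)%:Q + eps.
Proof.
move=> eps heps; exists 1%N => e he r hnot.
have pp : prime p := pcharf_prime hp.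
have hq : (1 < p ^ e)%N.
  rewrite -(subnKC he) expnS; apply: leq_trans (prime_gt1 pp) _.
  by rewrite leq_pmulr // expn_gt0 prime_gt0.
have hlt : (r < (rank_star P + 2) * p ^ e)%N.
  by rewrite ltnNge; apply/negP => hR; apply: hnot => f; apply: hibi_m_pow_sub_frob.
have hq0 : 0 < (p ^ e)%N%:Q by rewrite ltr0n expn_gt0 prime_gt0.
rewrite ler_pdivrMr //; apply: le_trans (_ : ((rank_star P + 2) * p ^ e)%N%:Q <= _).
  by rewrite ler_nat ltnW.
rewrite PoszM intrM; apply: ler_wpM2r; first by rewrite ler0z.
by rewrite lerDl ltW.
Qed.
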